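(* Let $\mathcal H_A$ be a finite-dimensional Hilbert space, $N\ge1$, and $\mathcal F(A)\subseteq\mathcal D(\mathcal H_A)$ a set of free states which is affine, with $N$-partite free states $\mathcal F(A_1\dots A_N)=\mathrm{Aff}\big(\mathcal F(A)\otimes\dots\otimes\mathcal F(A)\big)$ ($N$ factors). Suppose $\Delta$ is a resource-destroying map for $\mathcal F(A)$. Then the censorship implemented by $\Delta^{\otimes N}$ is unbreakable: there is no $\rho\in\mathcal D(\mathcal H_A^{\otimes N})$ with $\rho\notin\mathcal F(A_1\dots A_N)$ and $\Delta^{\otimes N}(\rho)=\rho$.
   Context: For a finite-dimensional Hilbert space $\mathcal H$, $\mathcal D(\mathcal H)$ denotes the set of density operators on $\mathcal H$. For $S\subseteq\mathcal D(\mathcal H)$, $\mathrm{Aff}(S)=\{\sum_a t_a\sigma_a:\ \text{finitely many }\sigma_a\in S,\ t_a\in\mathbb R,\ \sum_a t_a=1\}\cap\mathcal D(\mathcal H)$; $S$ is affine if $\mathrm{Aff}(S)=S$. For sets of states, $S_1\otimes\dots\otimes S_N=\{\rho_1\otimes\dots\otimes\rho_N:\rho_a\in S_a\}$. A channel is a linear completely positive trace-preserving map. A resource-destroying (RD) map for $\mathcal F(A)$ is a channel $\Delta$ on operators on $\mathcal H_A$ such that $\Delta(\rho)\in\mathcal F(A)$ for all $\rho\in\mathcal D(\mathcal H_A)$ and $\Delta(\sigma)=\sigma$ for all $\sigma\in\mathcal F(A)$. *)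

From HB Require Import structures.
From mathcomp Require Import all_boot all_order all_algebra.
From mathcomp Require Import complex mxtens.
From mathcomp Require Import reals.
Set Implicit Arguments. Unset Strict Implicit. Unset Printing Implicit Defensive.
Import Order.TTheory GRing.Theory Num.Theory.
Local Open Scope ring_scope.

(* The N-fold tensor product of C^d is C^(d^N), with the
   Kronecker product *t of mathcomp-real-closed's mxtens. *)

Section Quantum.
Variable C : numClosedFieldType.

Definition adjmx {m n} (A : 'M[C]_(m, n)) : 'M[C]_(n, m) := (map_mx Num.conj A)^T.

Definition psd {n} (X : 'M[C]_n) : Prop :=
  forall v : 'cV[C]_n, 0 <= (adjmx v *m X *m v) 0 0.

Definition density {n} (X : 'M[C]_n) : Prop := psd X /\ \tr X = 1.

Definition tensmap {m n} (f : 'M[C]_m -> 'M[C]_m) (g : 'M[C]_n -> 'M[C]_n)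
  (X : 'M[C]_(m * n)) : 'M[C]_(m * n) :=
  \sum_(i < m) \sum_(j < m) \sum_(k < n) \sum_(l < n)
    X (mxtens_index (i, k)) (mxtens_index (j, l)) *:
      (f (delta_mx i j) *t g (delta_mx k l)).

Definition CP {d} (D : 'M[C]_d -> 'M[C]_d) : Prop :=
  forall (k : nat) (X : 'M[C]_(k * d)), psd X -> psd (tensmap id D X).

Definition TP {d} (D : 'M[C]_d -> 'M[C]_d) : Prop :=
  forall X, \tr (D X) = \tr X.

Definition channel {d} (D : {linear 'M[C]_d -> 'M[C]_d}) : Prop :=
  CP D /\ TP D.

Definition RD_map {d} (F : 'M[C]_d -> Prop) (D : {linear 'M[C]_d -> 'M[C]_d})
  : Prop :=
  channel D /\ (forall rho, density rho -> F (D rho))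
            /\ (forall sigma, F sigma -> D sigma = sigma).

Fixpoint tensN_rec {d} (rho : nat -> 'M[C]_d) (k : nat) : 'M[C]_(d ^ k.+1) :=
  match k return 'M[C]_(d ^ k.+1) with
  | k'.+1 => rho 0%N *t tensN_rec (fun i => rho i.+1) k'
  | 0 => rho 0%N
  end.

Definition tensN {d} (rho : nat -> 'M[C]_d) (N : nat) : 'M[C]_(d ^ N) :=
  if N is N'.+1 return 'M[C]_(d ^ N) then tensN_rec rho N' else 1.

Fixpoint tpow_rec {d} (D : 'M[C]_d -> 'M[C]_d) (k : nat) :
  'M[C]_(d ^ k.+1) -> 'M[C]_(d ^ k.+1) :=
  match k return 'M[C]_(d ^ k.+1) -> 'M[C]_(d ^ k.+1) with
  | k'.+1 => fun X => @tensmap d (d ^ k'.+1) D (@tpow_rec d D k') X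
  | 0 => D
  end.

Definition tpow {d} (D : 'M[C]_d -> 'M[C]_d) (N : nat) :
  'M[C]_(d ^ N) -> 'M[C]_(d ^ N) :=
  if N is N'.+1 return 'M[C]_(d ^ N) -> 'M[C]_(d ^ N) then @tpow_rec d D N'
  else id.

Definition prodset {d} (S : 'M[C]_d -> Prop) (N : nat) : 'M[C]_(d ^ N) -> Prop :=
  fun X => exists rho : nat -> 'M[C]_d,
    (forall i, (i < N)%N -> S (rho i)) /\ X = tensN rho N.

End Quantum.
Arguments tpow {C d} D N _.
Arguments tpow_rec {C d} D k _.
Arguments tensN {C d} rho N.
Arguments tensN_rec {C d} rho k.
Arguments prodset {C d} S N _.
Arguments tensmap {C m n} f g X.


Section Affine.
Variable R : realType.
Local Notation C := R[i].

Definition Aff {n} (S : 'M[C]_n -> Prop) : 'M[C]_n -> Prop :=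
  fun X => density X /\
    exists (k : nat) (t : 'I_k -> R) (sigma : 'I_k -> 'M[C]_n),
      (forall a, S (sigma a)) /\ \sum_(a < k) t a = 1 /\
      X = \sum_(a < k) (Complex (t a) 0) *: sigma a.

Definition affine {n} (S : 'M[C]_n -> Prop) : Prop :=
  forall X, Aff S X <-> S X.
End Affine.

From mathcomp Require Import all_boot all_order all_algebra.
From mathcomp Require Import complex mxtens reals ring.
Import Order.TTheory GRing.Theory Num.Theory.
Local Open Scope ring_scope.

(* Density operators span all complex matrices (by polarization, every matrix
   unit is a complex combination of pure states), so a linear map sending
   states into F sends every matrix into the complex span of F, and its N-th
   tensor power sends every matrix into the complex span of F (x) ... (x) F.
   A fixed state rho is thus a complex combination sum_p c_p sigma_p of
   hermitian unit-trace product states; as rho is hermitian it equals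
   sum_p Re(c_p) sigma_p, and taking traces gives sum_p Re(c_p) = 1, i.e.
   rho lies in Aff(F (x) ... (x) F). *)

Section ComplexSpan.
Set Implicit Arguments.
Unset Strict Implicit.
Variable C : numClosedFieldType.

Definition cspan {n} (G : 'M[C]_n -> Prop) (X : 'M[C]_n) : Prop :=
  exists s : seq (C * 'M[C]_n),
    (forall p, p \in s -> G p.2) /\ X = \sum_(p <- s) p.1 *: p.2.

Section Closure.
Variables (n : nat) (G : 'M[C]_n -> Prop).

Lemma cspan0 : cspan G 0.
Proof. by exists [::]; rewrite big_nil. Qed.

Lemma cspanD X Y : cspan G X -> cspan G Y -> cspan G (X + Y).
Proof.
move=> [s [Gs ->]] [t [Gt ->]]; exists (s ++ t); split; last by rewrite big_cat.
by move=> p; rewrite mem_cat => /orP[]; [apply: Gs | apply: Gt].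
Qed.

Lemma cspanZ c X : cspan G X -> cspan G (c *: X).
Proof.
move=> [s [Gs ->]]; exists [seq (c * p.1, p.2) | p <- s]; split.
  move=> q /mapP[p ps ->] /=; exact: Gs.
by rewrite big_map scaler_sumr; apply: eq_bigr => p _; rewrite scalerA.
Qed.

Lemma cspanB X Y : cspan G X -> cspan G Y -> cspan G (X - Y).
Proof. by move=> GX GY; rewrite -scaleN1r; apply/cspanD/cspanZ. Qed.

Lemma mem_cspan X : G X -> cspan G X.
Proof.
move=> GX; exists [:: (1, X)]; rewrite big_seq1 scale1r; split=> // p.
by rewrite inE => /eqP ->.
Qed.

Lemma cspan_sum (I : Type) (r : seq I) (P : pred I) (F : I -> 'M[C]_n) :
  (forall i, P i -> cspan G (F i)) -> cspan G (\sum_(i <- r | P i) F i).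
Proof. by move=> GF; apply: (big_ind (cspan G)); [exact: cspan0 | exact: cspanD |]. Qed.

End Closure.

Lemma cspanS n (G G' : 'M[C]_n -> Prop) X :
  (forall Y, G Y -> G' Y) -> cspan G X -> cspan G' X.
Proof. by move=> GG' [s [Gs ->]]; exists s; split=> // p /Gs /GG'. Qed.

Lemma cspan_linear m n (G : 'M[C]_m -> Prop) (G' : 'M[C]_n -> Prop)
    (f : {linear 'M[C]_m -> 'M[C]_n}) X :
  (forall Y, G Y -> cspan G' (f Y)) -> cspan G X -> cspan G' (f X).
Proof.
move=> fG [s [Gs ->]]; rewrite linear_sum big_seq; apply: cspan_sum => p ps.
by rewrite linearZ; apply/cspanZ/fG/Gs.
Qed.

Lemma adjmx0 m n : adjmx (0 : 'M[C]_(m, n)) = 0.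
Proof. by apply/matrixP => i j; rewrite !mxE conjC0. Qed.

Lemma adjmxK m n (A : 'M[C]_(m, n)) : adjmx (adjmx A) = A.
Proof. by apply/matrixP => i j; rewrite !mxE conjCK. Qed.

Lemma adjmxD m n (A B : 'M[C]_(m, n)) : adjmx (A + B) = adjmx A + adjmx B.
Proof. by apply/matrixP => i j; rewrite !mxE rmorphD. Qed.

Lemma adjmxZ m n c (A : 'M[C]_(m, n)) : adjmx (c *: A) = c^* *: adjmx A.
Proof. by apply/matrixP => i j; rewrite !mxE rmorphM. Qed.

Lemma adjmxM m n p (A : 'M[C]_(m, n)) (B : 'M[C]_(n, p)) :
  adjmx (A *m B) = adjmx B *m adjmx A.
Proof. by rewrite /adjmx map_mxM trmx_mul. Qed.

Lemma adjmx_delta n (a : 'I_n) : adjmx (delta_mx a 0) = delta_mx 0 a :> 'M[C]_(1, n).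
Proof.
apply/matrixP => i j; rewrite !mxE.
by case: (_ == _); case: (_ == _); rewrite ?conjC0 ?conjC1.
Qed.

Lemma qform_delta n (X : 'M[C]_n) a b :
  adjmx (delta_mx a 0) *m X *m delta_mx b 0 = (X a b)%:M :> 'M[C]_1.
Proof.
rewrite adjmx_delta; apply/matrixP => x y.
by rewrite [x]ord1 [y]ord1 -rowE -colE !mxE eqxx mulr1n.
Qed.

Lemma qformD n (Y : 'M[C]_n) a b w :
  let v : 'cV[C]_n := delta_mx a 0 + w *: delta_mx b 0 in
  (adjmx v *m Y *m v) 0 0 = Y a a + w * Y a b + w^* * Y b a + w^* * w * Y b b.
Proof.
rewrite /= adjmxD adjmxZ !mulmxDl !mulmxDr -!scalemxAl -!scalemxAr !scalerA.
by rewrite !qform_delta !mxE !mulr1n !addrA.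
Qed.

Lemma qform_eq0 n (Y : 'M[C]_n) :
  (forall v : 'cV[C]_n, (adjmx v *m Y *m v) 0 0 = 0) -> Y = 0.
Proof.
move=> Y0; have Ydiag a : Y a a = 0.
  by have := Y0 (delta_mx a 0); rewrite qform_delta mxE mulr1n.
apply/matrixP => a b; rewrite mxE.
have := Y0 (delta_mx a 0 + 1 *: delta_mx b 0).
have := Y0 (delta_mx a 0 + 'i *: delta_mx b 0).
rewrite !qformD !Ydiag conjC1 conjCi !(mul1r, mulr0, addr0, add0r) => hi h1.
have Yba : Y b a = - Y a b by apply/eqP; rewrite -addr_eq0 addrC h1.
have : 'i * (2 * Y a b) = 0 by rewrite -hi Yba; ring.
by move/eqP; rewrite !mulf_eq0 (negbTE (neq0Ci C)) pnatr_eq0 => /eqP.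
Qed.

Lemma psd_herm n (X : 'M[C]_n) : psd X -> adjmx X = X.
Proof.
move=> psdX; apply/eqP; rewrite -subr_eq0; apply/eqP/qform_eq0 => v.
rewrite mulmxBr mulmxBl mxE [X in _ + X]mxE.
suff -> : adjmx v *m adjmx X *m v = adjmx (adjmx v *m X *m v).
  by rewrite [X in X + _]mxE [X in X + _]mxE geC0_conj ?subrr.
by rewrite !adjmxM adjmxK mulmxA.
Qed.

Lemma psd_outer n (u : 'cV[C]_n) : psd (u *m adjmx u).
Proof.
move=> v; have -> : adjmx v *m (u *m adjmx u) *m v =
                  (adjmx v *m u) *m adjmx (adjmx v *m u).
  by rewrite adjmxM adjmxK !mulmxA.
by rewrite mxE big_ord1 !mxE mul_conjC_ge0.
Qed.

Lemma psdZ n c (X : 'M[C]_n) : 0 <= c -> psd X -> psd (c *: X).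
Proof. by move=> c_ge0 psdX v; rewrite -scalemxAr -scalemxAl mxE mulr_ge0. Qed.

Lemma mxtrace_outer n (u : 'cV[C]_n) :
  \tr (u *m adjmx u) = \sum_k u k 0 * (u k 0)^*.
Proof. by apply: eq_bigr => k _; rewrite mxE big_ord1 !mxE. Qed.

Lemma cspan_density_psd n (X : 'M[C]_n) :
  psd X -> 0 < \tr X -> cspan (@density C n) X.
Proof.
move=> psdX trX; have trX0 : \tr X != 0 by rewrite lt0r_neq0.
rewrite -[X]scale1r -(mulfV trX0) -scalerA; apply/cspanZ/mem_cspan; split.
  by apply: psdZ; rewrite // invr_ge0 ltW.
by rewrite mxtraceZ mulVf.
Qed.

Lemma cspan_density_outer n (u : 'cV[C]_n) : cspan (@density C n) (u *m adjmx u).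
Proof.
have tr_ge0 : 0 <= \tr (u *m adjmx u).
  by rewrite mxtrace_outer; apply: sumr_ge0 => k _; apply: mul_conjC_ge0.
have [tr0 | tr_neq0] := eqVneq (\tr (u *m adjmx u)) 0; last first.
  by apply: cspan_density_psd; [exact: psd_outer | rewrite lt0r tr_neq0].
suff -> : u = 0 by rewrite mul0mx; apply: cspan0.
move: tr0; rewrite mxtrace_outer => /psumr_eq0P u0.
apply/matrixP => k j; rewrite [j]ord1 mxE.
by apply/eqP; rewrite -mul_conjC_eq0; apply/eqP/u0 => // i _; apply: mul_conjC_ge0.
Qed.

Lemma outer_polarization n (u v : 'cV[C]_n) :
  let P w := (u + w *: v) *m adjmx (u + w *: v) - u *m adjmx u - v *m adjmx v in
  u *m adjmx v = 2^-1 *: (P 1 + 'i *: P 'i).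
Proof.
have ii : 'i * 'i = -1 :> C by rewrite -expr2 sqrCi.
apply/matrixP => a b; rewrite !mxE !big_ord1 !mxE !rmorphD !rmorphM /= conjC1 conjCi.
by field: ii.
Qed.

Lemma cspan_density n (X : 'M[C]_n) : cspan (@density C n) X.
Proof.
have outer (u v : 'cV[C]_n) : cspan (@density C n) (u *m adjmx v).
  rewrite outer_polarization; apply/cspanZ/cspanD; last apply: cspanZ;
  by apply/cspanB/cspan_density_outer/cspanB/cspan_density_outer/cspan_density_outer.
rewrite [X]matrix_sum_delta; apply: cspan_sum => a _; apply: cspan_sum => b _.
by rewrite -[delta_mx a b](@mul_delta_mx C n 1 n 0) -adjmx_delta; apply/cspanZ/outer.
Qed.

Lemma tensmxDl m n p q (A B : 'M[C]_(m, n)) (E : 'M[C]_(p, q)) :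
  (A + B) *t E = A *t E + B *t E.
Proof. by apply/matrixP => i j; rewrite !mxE mulrDl. Qed.

Lemma tensmxDr m n p q (A : 'M[C]_(m, n)) (B E : 'M[C]_(p, q)) :
  A *t (B + E) = A *t B + A *t E.
Proof. by apply/matrixP => i j; rewrite !mxE mulrDr. Qed.

Lemma tensmxZl m n p q c (A : 'M[C]_(m, n)) (E : 'M[C]_(p, q)) :
  (c *: A) *t E = c *: (A *t E).
Proof. by apply/matrixP => i j; rewrite !mxE mulrA. Qed.

Lemma tensmxZr m n p q c (A : 'M[C]_(m, n)) (E : 'M[C]_(p, q)) :
  A *t (c *: E) = c *: (A *t E).
Proof. by apply/matrixP => i j; rewrite !mxE mulrCA. Qed.

Lemma adjmx_tens m n p q (A : 'M[C]_(m, n)) (B : 'M[C]_(p, q)) :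
  adjmx (A *t B) = adjmx A *t adjmx B.
Proof. by rewrite /adjmx map_mxT trmx_tens. Qed.

Lemma mxtrace_tens m n (A : 'M[C]_m) (B : 'M[C]_n) : \tr (A *t B) = \tr A * \tr B.
Proof. by rewrite /mxtrace mulr_sum; apply: eq_bigr => k _; rewrite !mxE. Qed.

Definition tensset {m n} (G : 'M[C]_m -> Prop) (H : 'M[C]_n -> Prop)
  (Z : 'M[C]_(m * n)) : Prop :=
  exists X Y, [/\ G X, H Y & Z = X *t Y].

Lemma cspan_tens m n (G : 'M[C]_m -> Prop) (H : 'M[C]_n -> Prop) A B :
  cspan G A -> cspan H B -> cspan (tensset G H) (A *t B).
Proof.
move=> [s [Gs ->]] [t [Ht ->]]; set Bt := \sum_(q <- t) _.
rewrite (big_morph (fun X => X *t Bt) (fun X Y => tensmxDl X Y Bt) (tens0mx Bt)).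
rewrite big_seq; apply: cspan_sum => p ps; rewrite tensmxZl; apply: cspanZ.
rewrite /Bt (big_morph (tensmx p.2) (tensmxDr p.2) (tensmx0 p.2)).
rewrite big_seq; apply: cspan_sum => q qt; rewrite tensmxZr; apply/cspanZ/mem_cspan.
by exists p.2, q.2; split; [apply: Gs | apply: Ht |].
Qed.

Lemma tensN_rec_herm d (rho : nat -> 'M[C]_d) k :
  (forall i, (i <= k)%N -> adjmx (rho i) = rho i /\ \tr (rho i) = 1) ->
  adjmx (tensN_rec rho k) = tensN_rec rho k /\ \tr (tensN_rec rho k) = 1.
Proof.
elim: k rho => [|k IH] rho herm_rho /=; first exact: herm_rho.
have [adj0 tr0] := herm_rho 0%N isT.
have [adjS trS] := IH (fun i => rho i.+1) (fun i => herm_rho i.+1).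
by rewrite adjmx_tens mxtrace_tens adj0 tr0 adjS trS mulr1.
Qed.

Section TensorPower.
Variables (d : nat) (F : 'M[C]_d -> Prop) (D : {linear 'M[C]_d -> 'M[C]_d}).
Hypothesis D_cspan : forall Y, cspan F (D Y).

Lemma tpow_rec_cspan k X : cspan (prodset F k.+1) (tpow_rec D k X).
Proof.
elim: k X => [|k IH] X /=.
  by apply: (cspanS (G' := prodset F 1) _ (D_cspan X)) => Y FY; exists (fun=> Y).
rewrite /tensmap; do 4 apply: cspan_sum => ? _; apply: cspanZ.
apply: (cspanS (G' := prodset F k.+2) _ (cspan_tens (D_cspan _) (IH _))).
move=> _ [A [Y [FA [rho [Frho ->]] ->]]].
exists (fun i => if i is i'.+1 then rho i' else A).
by split=> // -[|i] //= lt_ik; apply: Frho.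
Qed.

End TensorPower.

End ComplexSpan.

Lemma Aff_hermitian_cspan (R : realType) n (S : 'M[R[i]]_n -> Prop) X :
  (forall Y, S Y -> adjmx Y = Y /\ \tr Y = 1) ->
  density X -> cspan S X -> Aff S X.
Proof.
move=> herm densX [s [Ss EX]]; split=> //.
have herm_s p : p \in s -> adjmx p.2 = p.2 /\ \tr p.2 = 1 by move/Ss/herm.
exists (size s), (fun a => complex.Re (nth (0, 0) s a).1), (fun a => (nth (0, 0) s a).2).
split; [by move=> a; apply/Ss/mem_nth | split].
  have : \sum_(p <- s) p.1 = 1.
    rewrite -(proj2 densX) EX raddf_sum; apply: eq_big_seq => p ps /=.
    by rewrite mxtraceZ (herm_s p ps).2 mulr1.
  move/(congr1 (@complex.Re R)).
  by rewrite (raddf_sum (@complex.Re R : Rcomplex R -> R)) (big_nth (0, 0)) big_mkord.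
have adjX : adjmx X = X by apply: psd_herm; case: densX.
have {1}-> : X = 2^-1 *: (X + adjmx X).
  by rewrite adjX -mulr2n -[X *+ 2]scaler_nat scalerA mulVf ?pnatr_eq0 ?scale1r.
rewrite {2}EX (big_morph _ (@adjmxD _ _ _) (@adjmx0 _ _ _)).
under eq_big_seq => p ps do rewrite adjmxZ (herm_s p ps).1.
rewrite {1}EX -big_split scaler_sumr /= (big_nth (0, 0)) big_mkord.
by apply: eq_bigr => a _; rewrite -scalerDl scalerA complexr0 ReJ_add mulrC.
Qed.

Theorem theorem2 (R : realType) (d N : nat) (F : 'M[R[i]]_d -> Prop)
  (D : {linear 'M[R[i]]_d -> 'M[R[i]]_d}) :
  (0 < N)%N ->
  (forall X, F X -> density X) ->
  affine F ->
  RD_map F D ->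
  ~ exists rho : 'M[R[i]]_(d ^ N),
      density rho /\ ~ Aff (prodset F N) rho /\ tpow D N rho = rho.
Proof.
move=> N_gt0 F_density _ [_ [D_free _]] [rho [dens_rho [notAff fixed]]].
case: N N_gt0 rho dens_rho notAff fixed => // k _ rho dens_rho notAff fixed.
apply/notAff/Aff_hermitian_cspan => //.
  move=> _ [sigma [Fsigma ->]]; apply: tensN_rec_herm => i lt_ik.
  by have [psd_i tr_i] := F_density _ (Fsigma i lt_ik); split; first exact: psd_herm.
rewrite -fixed; apply: tpow_rec_cspan => Y.
by apply: (cspan_linear _ (cspan_density Y)) => Z dens_Z; apply/mem_cspan/D_free.
Qed.
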